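(* If $k=2^i-1$ is a prime (with $i\ge2$), then $k\in\mathcal C_i\setminus\mathcal C_{i-1}$.
   Context: For a positive integer $m$, $\mathcal C_m$ is the set of odd positive integers $k$ for which there exist integers $0\le j_1<j_2<\cdots<j_m\le m+k-2$ with $2^{k+m}-1\equiv \sum_{i=1}^m 2^{j_i}\pmod k$. For $i=2$, $\mathcal C_{1}$ is as defined with $m=1$. *)

From mathcomp Require Import all_boot.
Set Implicit Arguments. Unset Strict Implicit. Unset Printing Implicit Defensive.

Definition in_C (m k : nat) : Prop :=
  [/\ odd k, 0 < k &
   exists js : seq nat,
     [/\ sorted ltn js, size js = m, all (fun j => j <= m + k - 2) js &
         2 ^ (k + m) - 1 = \sum_(j <- js) 2 ^ j %[mod k]]].

From mathcomp Require Import all_boot zify.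
Set Implicit Arguments. Unset Strict Implicit. Unset Printing Implicit Defensive.

(* Let k = 2^i - 1 be a Mersenne prime, i >= 2.  By Fermat's little theorem
   2^(k + m) = 2^(m + 1) (mod k), so the congruence defining C_m reads
   2^(m+1) - 1 = 2^(j_1) + ... + 2^(j_m) (mod k).

   Membership in C_i: the exponents 1, 2, ..., i - 1, i + 1 sum (as powers of
   two) to (k - 1) + 2 (k + 1) = 3k + 1, which is 2^(i+1) - 1 = 2k + 1 modulo k.

   Non-membership in C_(i-1): the condition would make k divide a sum of
   i - 1 powers of two.  Modulo 2^n - 1 exponents of 2 can be reduced mod n,
   and a nonempty multiset of exponents in [0, n) whose powers of two sum to a
   multiple of 2^n - 1 has at least n elements ([mersenne_multiple_size]):
   merging two equal exponents x, x into x + 1 (mod n) keeps the sum modulo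
   2^n - 1 and shortens the multiset, and a set of fewer than n distinct
   exponents sums to a positive number below 2^n - 1. *)

Lemma sum_pow2_iota n : \sum_(r <- iota 0 n) 2 ^ r = (2 ^ n).-1.
Proof.
elim: n => [|n IH]; first by rewrite big_nil.
rewrite -addn1 iotaD big_cat /= IH big_seq1 add0n addn1 expnS.
have : 0 < 2 ^ n by rewrite expn_gt0.
lia.
Qed.

(* Since 2^n = 1 modulo 2^n - 1, exponents of 2 may be reduced modulo n. *)
Lemma expn2_mod_mersenne n j : 2 ^ j = 2 ^ (j %% n) %[mod (2 ^ n).-1].
Proof.
have pow_n_mod : 2 ^ n = 1 %[mod (2 ^ n).-1].
  by rewrite -{1}(prednK (expn_gt0 2 n)) -addn1 modnDl.
rewrite {1}(divn_eq j n) expnD (mulnC (j %/ n)) expnM.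
by rewrite -modnMml -modnXm pow_n_mod modnXm exp1n modnMml mul1n.
Qed.

Lemma sum_pow2_mod_mersenne n s :
  \sum_(j <- s) 2 ^ j = \sum_(j <- map (modn^~ n) s) 2 ^ j %[mod (2 ^ n).-1].
Proof.
elim: s => [|x s IH] //=.
by rewrite !big_cons -modnDm (expn2_mod_mersenne n x) IH modnDm.
Qed.

Lemma sum_pow2_gt0 s : s != [::] -> 0 < \sum_(x <- s) 2 ^ x.
Proof. by case: s => // x s _; rewrite big_cons addn_gt0 expn_gt0. Qed.

(* Fewer than n distinct exponents in [0, n) miss some exponent, so their
   powers of two sum to less than 1 + 2 + ... + 2^(n-1). *)
Lemma sum_pow2_uniq_lt n s :
  all (fun x => x < n) s -> uniq s -> size s < n ->
  \sum_(x <- s) 2 ^ x < (2 ^ n).-1.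
Proof.
move=> s_lt_n s_uniq small_s.
set c := [seq r <- iota 0 n | r \notin s].
have s_c_perm : perm_eq (s ++ c) (iota 0 n).
  apply: uniq_perm; rewrite ?iota_uniq //.
    rewrite cat_uniq s_uniq filter_uniq ?iota_uniq // andbT.
    by apply/hasPn => r; rewrite mem_filter => /andP[].
  move=> r; rewrite mem_cat mem_filter mem_iota add0n /=.
  by case r_s: (r \in s) => //=; rewrite (allP s_lt_n r r_s).
have c_nonempty : c != [::].
  move: (perm_size s_c_perm); rewrite size_cat size_iota -size_eq0 -lt0n => n_eq.
  by move: small_s; rewrite -n_eq -{1}(addn0 (size s)) ltn_add2l.
have c_sum_pos := sum_pow2_gt0 c_nonempty.
rewrite -sum_pow2_iota -(perm_big _ s_c_perm) big_cat /=.
by rewrite -{1}(addn0 (\sum_(x <- s) _)) ltn_add2l.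
Qed.

Lemma not_uniq_perm_dup (T : eqType) (s : seq T) :
  ~~ uniq s -> exists x t, perm_eq s (x :: x :: t).
Proof.
elim: s => [|y s IH] //=; rewrite negb_and negbK.
case: (boolP (y \in s)) => [y_s _ | _ /= /IH [x [t s_perm]]].
  by exists y, (rem y s); rewrite perm_cons perm_to_rem.
exists x, (y :: t).
by rewrite perm_sym -(perm_catCA [:: y] [:: x; x] t) /= perm_cons perm_sym.
Qed.

Lemma mersenne_multiple_size n s :
  all (fun x => x < n) s -> s != [::] ->
  (2 ^ n).-1 %| \sum_(x <- s) 2 ^ x -> n <= size s.
Proof.
have [m size_s] := ubnP (size s); elim: m s size_s => // m IH s size_s.
move=> s_lt_n s_nonempty dvd_sum.
case: (boolP (uniq s)) => [s_uniq | /not_uniq_perm_dup [x [t s_perm]]].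
  rewrite leqNgt; apply/negP => /(sum_pow2_uniq_lt s_lt_n s_uniq).
  by rewrite ltnNge (dvdn_leq (sum_pow2_gt0 s_nonempty) dvd_sum).
have x_lt_n : x < n by apply: (allP s_lt_n); rewrite (perm_mem s_perm) inE eqxx.
have n_pos : 0 < n by apply: leq_ltn_trans x_lt_n.
(* Merge the two copies of x into one copy of x + 1, reduced modulo n. *)
set s' := x.+1 %% n :: t.
have size_s' : size s = (size s').+1 by rewrite (perm_size s_perm).
have sum_s : \sum_(y <- s) 2 ^ y = 2 ^ x.+1 + \sum_(y <- t) 2 ^ y.
  by rewrite (perm_big _ s_perm) /= !big_cons addnA addnn -mul2n expnS.
have : n <= size s'.
  apply: IH => //; first by rewrite -ltnS -size_s'.
    apply/allP => y; rewrite inE => /predU1P [-> | y_t]; first exact: ltn_pmod.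
    by apply: (allP s_lt_n); rewrite (perm_mem s_perm) !inE y_t !orbT.
  move: dvd_sum; rewrite /dvdn sum_s big_cons => /eqP sum_mod; apply/eqP.
  by rewrite -modnDml -(expn2_mod_mersenne n x.+1) modnDml.
by rewrite size_s'; apply: leqW.
Qed.

Lemma expn2_shift_prime p m : prime p -> 2 ^ (p + m) = 2 ^ m.+1 %[mod p].
Proof. by move=> p_prime; rewrite expnD -modnMml fermat_little // modnMml -expnS. Qed.

Lemma subn1_eqmod d x y : 0 < x -> (x - 1 == y %[mod d]) = (x == y + 1 %[mod d]).
Proof. by move=> x_pos; rewrite -(eqn_modDr 1) subnK. Qed.

Section MersennePrime.

Variable i : nat.
Hypothesis i_ge2 : 2 <= i.
Hypothesis k_prime : prime (2 ^ i).-1.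

Let k := (2 ^ i).-1.

Let pow_i : 2 ^ i = k + 1.
Proof. by rewrite addn1 prednK ?expn_gt0. Qed.

Let k_odd : odd k.
Proof. by rewrite /k -subn1 oddB ?expn_gt0 // oddX /= orbF addbT -lt0n ltnW. Qed.

Let i_pos : 0 < i.
Proof. exact: ltnW. Qed.

Lemma mersenne_prime_in_C : in_C i k.
Proof.
split; [exact: k_odd | exact: prime_gt0 |].
have k_ge3 : 3 <= k.
  by rewrite -(leq_add2r 1) -pow_i (leq_trans _ (leq_pexp2l (isT : 0 < 2) i_ge2)).
have sum_low : \sum_(j <- iota 1 i.-1) 2 ^ j + 1 = k.
  by rewrite /k -sum_pow2_iota -{2}(prednK i_pos) /= big_cons addnC.
exists (iota 1 i.-1 ++ [:: i.+1]); split.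
- rewrite sorted_pairwise; last exact: ltn_trans.
  rewrite pairwise_cat -sorted_pairwise ?iota_ltn_sorted /= ?andbT; last exact: ltn_trans.
  apply/allrelP => a b; rewrite mem_iota inE => /andP[_ a_lt] /eqP ->.
  by rewrite add1n prednK // in a_lt; apply: ltn_trans a_lt _.
- by rewrite size_cat size_iota /= addn1 prednK.
- rewrite all_cat /= andbT; apply/andP; split; last by lia.
  by apply/allP => a; rewrite mem_iota; lia.
- apply/eqP; rewrite subn1_eqmod ?expn_gt0 // big_cat big_seq1 /=.
  rewrite (expn2_shift_prime _ k_prime) expnS -/k pow_i.
  have -> : \sum_(j <- iota 1 i.-1) 2 ^ j + 2 * (k + 1) + 1 = k + 2 * (k + 1).
    by lia.
  by rewrite modnDl.
Qed.

Lemma mersenne_prime_notin_C_pred : ~ in_C i.-1 k.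
Proof.
case=> _ _ [js [_ size_js _ congr_js]].
have k_dvd : k %| \sum_(j <- map (modn^~ i) js) 2 ^ j.
  move/eqP: congr_js; rewrite subn1_eqmod ?expn_gt0 //.
  rewrite (expn2_shift_prime _ k_prime) prednK // -/k pow_i eqn_modDr.
  by rewrite modnn eq_sym /dvdn -(sum_pow2_mod_mersenne i js).
have : i <= i.-1.
  rewrite -size_js -(size_map (modn^~ i)); apply: mersenne_multiple_size k_dvd.
    by apply/allP => y /mapP [x _ ->]; exact: ltn_pmod.
  by rewrite -size_eq0 size_map size_js -lt0n -ltnS prednK.
by rewrite leqNgt ltn_predL i_pos.
Qed.

End MersennePrime.

Theorem mainTheorem8 (i : nat) (hi : 2 <= i) (hp : prime (2 ^ i - 1)) :
  in_C i (2 ^ i - 1) /\ ~ in_C (i - 1) (2 ^ i - 1).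
Proof.
rewrite !subn1 in hp *.
split; [exact: mersenne_prime_in_C | exact: mersenne_prime_notin_C_pred].
Qed.
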